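(* Let $\alpha\in(0,1)$. Let $\hat C_\alpha(X_{n+1})$ be the full conformal prediction region and $\tilde C_\alpha(X_{n+1})$ the upper approximate full conformal prediction region built from approximate scores $\tilde S_{D^y}$ and bounds $\tau_1(y),\dots,\tau_{n+1}(y)$ as described in the context. Then $\hat C_\alpha(X_{n+1})\subseteq \tilde C_\alpha(X_{n+1})$. Consequently, if $(X_1,Y_1),\dots,(X_{n+1},Y_{n+1})$ are exchangeable and the predictor $\hat f_D$ is invariant to permutations of the data in $D$, then $$\mathbb P\big[Y_{n+1}\in\tilde C_\alpha(X_{n+1})\big]\ \ge\ \mathbb P\big[Y_{n+1}\in \hat C_\alpha(X_{n+1})\big]\ \ge\ 1-\alpha .$$
   Context: Let $\mathcal X\subset\mathbb R^d$, $\mathcal Y\subset\mathbb R$. $D=\{(X_1,Y_1),\dots,(X_n,Y_n)\}$ are random variables with values in $\mathcal X\times\mathcal Y$ and $(X_{n+1},Y_{n+1})$ is a further random pair of which only $X_{n+1}$ is observed. For $y\in\mathcal Y$ let $D^y=\{(X_1,Y_1),\dots,(X_n,Y_n),(X_{n+1},y)\}$ and let $\hat f_{D^y}:\mathcal X\to\mathcal Y$ be a predictor trained on $D^y$. Given a non-conformity function $s:\mathcal Y\times\mathcal Y\to\mathbb R_+$, the non-conformity scores are $S_{D^y}(X_i,Y_i)=s(Y_i,\hat f_{D^y}(X_i))$ for $1\le i\le n$ and $S_{D^y}(X_{n+1},y)=s(y,\hat f_{D^y}(X_{n+1}))$. The full conformal p-value is $\hat\pi_D(X_{n+1},y)=\frac{1+\sum_{i=1}^n\mathbb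 1\{S_{D^y}(X_i,Y_i)\ge S_{D^y}(X_{n+1},y)\}}{n+1}$ and the full conformal prediction region is $\hat C_\alpha(X_{n+1})=\{y\in\mathcal Y:\hat\pi_D(X_{n+1},y)>\alpha\}$. Approximation scheme: for every $y\in\mathcal Y$ let $\tilde S_{D^y}(X_i,Y_i)$ ($1\le i\le n$) and $\tilde S_{D^y}(X_{n+1},y)$ be real numbers (approximate scores) and $0\le\tau_i(y)<\infty$ ($1\le i\le n+1$) be such that $|S_{D^y}(X_i,Y_i)-\tilde S_{D^y}(X_i,Y_i)|\le\tau_i(y)$ for $1\le i\le n$ and $|S_{D^y}(X_{n+1},y)-\tilde S_{D^y}(X_{n+1},y)|\le\tau_{n+1}(y)$. The upper approximate p-value is $\tilde\pi_D(X_{n+1},y)=\frac{1+\sum_{i=1}^n\mathbb 1\{\tilde S_{D^y}(X_i,Y_i)+\tau_i(y)\ge\tilde S_{D^y}(X_{n+1},y)-\tau_{n+1}(y)\}}{n+1}$ and the upper approximate full conformal region is $\tilde C_\alpha(X_{n+1})=\{y\in\mathcal Y:\tilde\pi_D(X_{n+1},y)>\alpha\}$. *)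

From HB Require Import structures.
From mathcomp Require Import all_boot all_order all_algebra all_fingroup.
From mathcomp Require Import all_classical all_reals all_analysis.

Set Implicit Arguments.
Unset Strict Implicit.
Unset Printing Implicit Defensive.

Import Order.TTheory GRing.Theory Num.Theory.
Local Open Scope classical_set_scope.
Local Open Scope ring_scope.

(* A data point (x, y) with x in R^d (represented as a d-tuple of reals,
   which carries the product Borel sigma-algebra) and y in R. *)
Definition datum (R : realType) (d : nat) := (d.-tuple R * R)%type.

Definition algo (R : realType) (d n : nat) :=
  (n.+1).-tuple (datum R d) -> d.-tuple R -> R.

Section Conformal.
Variables (R : realType) (d n : nat).
Variable s : R -> R -> R.
Variable A : algo R d n.

Definition augment (D : n.-tuple (datum R d)) (x : d.-tuple R) (y : R)
  : (n.+1).-tuple (datum R d) := [tuple of rcons D (x, y)].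

(* S_{D^y}(X_i,Y_i) for i = 1..n and S_{D^y}(X_{n+1},y) (index ord_max). *)
Definition score (D : n.-tuple (datum R d)) (x : d.-tuple R) (y : R)
  (i : 'I_n.+1) : R :=
  let Dy := augment D x y in s (tnth Dy i).2 (A Dy (tnth Dy i).1).

Definition first (i : 'I_n) : 'I_n.+1 := widen_ord (leqnSn n) i.

Definition pval (D : n.-tuple (datum R d)) (x : d.-tuple R) (y : R) : R :=
  (1 + #|[set i : 'I_n |
          score D x y ord_max <= score D x y (first i)]|%:R)
  / (n.+1)%:R.

Definition Chat (Yset : set R) (alpha : R) (D : n.-tuple (datum R d))
  (x : d.-tuple R) : set R :=
  [set y | Yset y /\ alpha < pval D x y].

(* upper approximate p-value, from approximate scores St y i and bounds tau y i
   (index ord_max stands for n+1) *)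
Definition pval_tilde (St tau : R -> 'I_n.+1 -> R) (y : R) : R :=
  (1 + #|[set i : 'I_n |
          St y ord_max - tau y ord_max <= St y (first i) + tau y (first i)]|%:R)
  / (n.+1)%:R.

Definition Ctilde (Yset : set R) (alpha : R) (St tau : R -> 'I_n.+1 -> R)
  : set R :=
  [set y | Yset y /\ alpha < pval_tilde St tau y].

Definition approx_valid (Yset : set R) (D : n.-tuple (datum R d))
  (x : d.-tuple R) (St tau : R -> 'I_n.+1 -> R) : Prop :=
  forall y, Yset y -> forall i : 'I_n.+1,
    0 <= tau y i /\ `|score D x y i - St y i| <= tau y i.

End Conformal.

Definition perm_invariant (R : realType) (d n : nat) (A : algo R d n) : Prop :=
  forall (sigma : 'S_n.+1) (t : (n.+1).-tuple (datum R d)),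
    A [tuple tnth t (sigma i) | i < n.+1] = A t.

Definition exchangeable (R : realType) (d n : nat) (dO : measure_display)
  (Omega : measurableType dO) (P : probability Omega R)
  (Z : 'I_n.+1 -> Omega -> datum R d) : Prop :=
  forall (sigma : 'S_n.+1) (B : set ((n.+1).-tuple (datum R d))),
    measurable B ->
    P ((fun w => [tuple Z (sigma i) w | i < n.+1]) @^-1` B)
    = P ((fun w => [tuple Z i w | i < n.+1]) @^-1` B).

(* Inclusion: whenever S_i >= S_{n+1}, the interval bounds give
   ~S_i + tau_i >= ~S_{n+1} - tau_{n+1}, so every index counted by the exact
   p-value is counted by the upper approximate one.
   Coverage: Y_{n+1} falls outside C_alpha exactly when at most alpha (n+1) of
   the n+1 scores are >= the score of the (n+1)-st point.  For any fixed list
   of scores at most alpha (n+1) indices j have this property in place of n+1,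
   and by exchangeability and permutation invariance of the predictor each
   index has it with the same probability; hence that probability is at most
   alpha. *)

From Pilot Require Import Defs.
From HB Require Import structures.
From mathcomp Require Import all_boot all_order all_algebra all_fingroup.
From mathcomp Require Import all_classical all_reals all_analysis.
From mathcomp Require Import measurable_realfun lra.

Import Order.TTheory GRing.Theory Num.Theory.
Local Open Scope classical_set_scope.
Local Open Scope ring_scope.

Set Implicit Arguments.
Unset Strict Implicit.
Unset Printing Implicit Defensive.

Lemma card_mkset (T : finType) (P : pred T) : #|[set x | P x]| = #|P|.
Proof. by rewrite mem_setE. Qed.

Lemma card_predE (T : finType) (P : pred T) : #|P| = (\sum_x P x)%N.
Proof.
by rewrite -sum1_card big_mkcond; apply: eq_bigr => x _; rewrite unfold_in; case: (P x).
Qed.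

Section RankCount.
Variables (R : realDomainType) (m : nat) (sc : 'I_m -> R).

Definition num_ge (j : 'I_m) : nat := #|[pred i | sc j <= sc i]|.

(* If j0 has the smallest score among the counted indices, all of them are
   counted by num_ge j0 <= k. *)
Lemma card_num_ge_le (k : R) : 0 <= k ->
  #|[pred j | (num_ge j)%:R <= k]|%:R <= k.
Proof.
move=> k_ge0; case: (pickP [pred j | (num_ge j)%:R <= k]) => [j1 j1_low|none].
  case: (arg_minP sc j1_low) => j0 j0_low j0_min.
  apply: le_trans j0_low; rewrite ler_nat /num_ge.
  by apply/subset_leq_card/fintype.subsetP => i; rewrite !inE; apply: j0_min.
by rewrite (eq_card0 none).
Qed.

End RankCount.

Lemma sum_probability_le_overlap dT (T : measurableType dT) (R : realType)
    (P : probability T R) m (F : 'I_m -> set T) (k : R) :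
  (forall j, measurable (F j)) ->
  (forall w, #|[pred j | w \in F j]|%:R <= k) ->
  (\sum_(j < m) P (F j) <= k%:E)%E.
Proof.
move=> mF overlap; have mind j : measurable_fun setT (fun w => (\1_(F j) w)%:E).
  exact/measurable_EFinP/measurable_indic.
under eq_bigr => j _ do rewrite -[F j]setIT -integral_indic //.
rewrite -ge0_integral_sum // -[k%:E]mule1 -(probability_setT P) -integral_cst //.
apply: ge0_le_integral => //; first by move=> w _; rewrite sume_ge0.
  exact: emeasurable_sum.
move=> w _; rewrite sumEFin lee_fin (le_trans _ (overlap w)) // card_predE.
by rewrite natr_sum ler_sum // => j _; rewrite indicE.
Qed.

Section ConformalScores.
Variables (R : realType) (d n : nat) (s : R -> R -> R) (A : algo R d n).

Definition tuple_score (t : (n.+1).-tuple (datum R d)) (j : 'I_n.+1) : R :=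
  s (tnth t j).2 (A t (tnth t j).1).

Lemma augment_mktuple (f : 'I_n.+1 -> datum R d) :
  augment [tuple f (first i) | i < n] (f ord_max).1 (f ord_max).2
  = [tuple f i | i < n.+1].
Proof.
apply: eq_from_tnth => i; rewrite tnth_mktuple (tnth_nth (f i)) /= nth_rcons.
rewrite size_map size_enum_ord; case: ltnP => [i_lt_n|i_ge_n].
  rewrite (nth_map (Ordinal i_lt_n)) ?size_enum_ord //; congr f.
  by apply: val_inj; rewrite /= nth_enum_ord.
have -> : i = ord_max by apply: val_inj => /=; apply/eqP; rewrite eqn_leq -ltnS ltn_ord.
by rewrite eqxx -surjective_pairing.
Qed.

Lemma pvalE D x y :
  Defs.pval s A D x y = (num_ge (tuple_score (augment D x y)) ord_max)%:R / n.+1%:R.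
Proof.
by rewrite /Defs.pval card_mkset /num_ge !card_predE big_ord_recr /= lexx natrD addrC.
Qed.

Lemma ChatE Yset alpha D x y :
  Chat s A Yset alpha D x y
  = (Yset y /\ alpha * n.+1%:R < (num_ge (tuple_score (augment D x y)) ord_max)%:R).
Proof. by rewrite /Chat /= pvalE ltr_pdivlMr. Qed.

Lemma Chat_sub_Ctilde Yset alpha D x St tau :
  approx_valid s A Yset D x St tau ->
  Chat s A Yset alpha D x `<=` Ctilde Yset alpha St tau.
Proof.
move=> valid y [Yy alpha_lt]; split => //; apply: (lt_le_trans alpha_lt).
rewrite /Defs.pval /pval_tilde ler_pM2r ?invr_gt0 // lerD2l ler_nat !card_mkset.
apply/subset_leq_card/fintype.subsetP => i; rewrite !unfold_in /=.
have [_] := valid y Yy ord_max; have [_] := valid y Yy (first i).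
rewrite !ler_distl => /andP[? ?] /andP[? ?]; lra.
Qed.

Lemma num_ge_perm (sigma : 'S_n.+1) t j : perm_invariant A ->
  num_ge (tuple_score [tuple tnth t (sigma i) | i < n.+1]) j
  = num_ge (tuple_score t) (sigma j).
Proof.
move=> invA; have scoreE i :
    tuple_score [tuple tnth t (sigma i) | i < n.+1] i = tuple_score t (sigma i).
  by rewrite /tuple_score invA tnth_mktuple.
rewrite /num_ge !card_predE [RHS](reindex_inj (@perm_inj _ sigma)) /=.
by apply: eq_bigr => i _; rewrite !scoreE.
Qed.

Hypothesis mA : measurable_fun setT
  (fun p : (n.+1).-tuple (datum R d) * d.-tuple R => A p.1 p.2).
Hypothesis ms : measurable_fun setT (fun p : R * R => s p.1 p.2).

Lemma measurable_tuple_score j : measurable_fun setT (tuple_score ^~ j).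
Proof.
have mtnth := measurable_tnth j (T := datum R d).
apply: (measurableT_comp ms (f := fun p : R * R => s p.1 p.2)
  (g := fun t => ((tnth t j).2, A t (tnth t j).1))).
apply: measurable_fun_pair; first exact: measurableT_comp measurable_snd mtnth.
apply: (measurableT_comp mA (f := fun p => A p.1 p.2)
  (g := fun t => (t, (tnth t j).1))).
exact: measurable_fun_pair (measurableT_comp measurable_fst mtnth).
Qed.

Lemma measurable_num_ge_le j (k : R) :
  measurable [set t | (num_ge (tuple_score t) j)%:R <= k].
Proof.
have num_geE t : (num_ge (tuple_score t) j)%:R =
    \sum_(i < n.+1) \1_[set t | tuple_score t j <= tuple_score t i] t :> R.
  rewrite /num_ge card_predE natr_sum; apply: eq_bigr => i _.
  by rewrite indicE mem_setE.
have m_num_ge : measurable_fun setT (fun t => (num_ge (tuple_score t) j)%:R : R).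
  rewrite (funext num_geE); apply: measurable_sum => i; apply: measurable_indic.
  rewrite -[X in measurable X]setTI.
  exact: measurable_fun_le (measurable_tuple_score j) (measurable_tuple_score i).
rewrite -[X in measurable X]setTI -[X in _ `&` X]/(_ @^-1` `]-oo, k]).
exact: m_num_ge.
Qed.

End ConformalScores.

Section Coverage.
Variables (R : realType) (d n : nat) (s : R -> R -> R) (A : algo R d n).
Hypothesis invA : perm_invariant A.
Hypothesis mA : measurable_fun setT
  (fun p : (n.+1).-tuple (datum R d) * d.-tuple R => A p.1 p.2).
Hypothesis ms : measurable_fun setT (fun p : R * R => s p.1 p.2).
Variables (dO : measure_display) (Omega : measurableType dO).
Variables (P : probability Omega R) (Z : 'I_n.+1 -> Omega -> datum R d).
Hypothesis mZ : forall i, measurable_fun setT (Z i).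
Hypothesis exZ : exchangeable P Z.

Let Zt w := [tuple Z i w | i < n.+1].

(* The conformal p-value of Z_j among Z_1, ..., Z_{n+1} is at most alpha. *)
Definition nonconforming (j : 'I_n.+1) (alpha : R) : set Omega :=
  [set w | (num_ge (tuple_score s A (Zt w)) j)%:R <= alpha * n.+1%:R].

Lemma measurable_nonconforming j alpha : measurable (nonconforming j alpha).
Proof.
have mZt : measurable_fun setT Zt.
  apply/measurable_fun_tnthP => i.
  by rewrite (_ : _ \o _ = Z i) //; apply/funext => w; rewrite /= tnth_mktuple.
rewrite -[X in measurable X]setTI.
exact: mZt measurableT _ (measurable_num_ge_le mA ms j _).
Qed.

Lemma nonconforming_exchangeable j alpha :
  P (nonconforming j alpha) = P (nonconforming ord_max alpha).
Proof.
rewrite -(exZ (tperm ord_max j) (measurable_num_ge_le mA ms ord_max _)).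
congr (P _); apply: eq_set => w.
have -> : [tuple Z (tperm ord_max j i) w | i < n.+1]
          = [tuple tnth (Zt w) (tperm ord_max j i) | i < n.+1].
  by apply: eq_mktuple => i; rewrite tnth_mktuple.
by rewrite /= num_ge_perm // tpermL.
Qed.

Lemma nonconforming_prob_le alpha : 0 <= alpha ->
  (P (nonconforming ord_max alpha) <= alpha%:E)%E.
Proof.
move=> alpha_ge0; have k_ge0 : 0 <= alpha * n.+1%:R by rewrite mulr_ge0.
rewrite -(@lee_pmul2r _ n.+1%:R%:E) // -EFinM mule_natr.
have <- : (\sum_(j < n.+1) P (nonconforming j alpha)
           = P (nonconforming ord_max alpha) *+ n.+1)%E.
  by rewrite (eq_bigr _ (fun j _ => nonconforming_exchangeable j alpha)) sumr_const card_ord.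
apply: sum_probability_le_overlap => [j|w]; first exact: measurable_nonconforming.
apply: le_trans (card_num_ge_le (tuple_score s A (Zt w)) k_ge0).
by rewrite ler_nat; apply/eq_leq/eq_card => j; rewrite !inE mem_setE.
Qed.

Lemma conformal_coverage alpha : 0 <= alpha ->
  ((1 - alpha)%:E <= P (~` nonconforming ord_max alpha))%E.
Proof.
move=> alpha_ge0; rewrite probability_setC ?EFinB; last exact: measurable_nonconforming.
exact: leeB (nonconforming_prob_le alpha_ge0).
Qed.

End Coverage.

Theorem lemma5 (R : realType) (d n : nat)
  (Xset : set (d.-tuple R)) (Yset : set R)
  (s : R -> R -> R) (A : algo R d n) (alpha : R) :
  (forall y yh : R, 0 <= s y yh) ->
  0 < alpha < 1 ->
  (* deterministic part: \hat C_alpha(X_{n+1}) is contained in \tilde C_alpha(X_{n+1}) *)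
  (forall (D : n.-tuple (datum R d)) (x : d.-tuple R)
          (St tau : R -> 'I_n.+1 -> R),
      approx_valid s A Yset D x St tau ->
      Chat s A Yset alpha D x `<=` Ctilde Yset alpha St tau)
  /\
  (* probabilistic consequence *)
  (forall (dO : measure_display) (Omega : measurableType dO)
          (P : probability Omega R)
          (X : 'I_n.+1 -> Omega -> d.-tuple R) (Y : 'I_n.+1 -> Omega -> R)
          (St tau : Omega -> R -> 'I_n.+1 -> R),
      (forall i, measurable_fun setT (X i)) ->
      (forall i, measurable_fun setT (Y i)) ->
      (forall i w, Xset (X i w) /\ Yset (Y i w)) ->
      exchangeable P (fun i w => (X i w, Y i w)) ->
      perm_invariant A ->
      measurable_fun setT
        (fun p : (n.+1).-tuple (datum R d) * d.-tuple R => A p.1 p.2) ->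
      measurable_fun setT (fun p : R * R => s p.1 p.2) ->
      (forall w, approx_valid s A Yset
                   [tuple (X (first i) w, Y (first i) w) | i < n]
                   (X ord_max w) (St w) (tau w)) ->
      measurable [set w | Ctilde Yset alpha (St w) (tau w) (Y ord_max w)] ->
      (P [set w | Chat s A Yset alpha
                    [tuple (X (first i) w, Y (first i) w) | i < n]
                    (X ord_max w) (Y ord_max w)]
       <= P [set w | Ctilde Yset alpha (St w) (tau w) (Y ord_max w)])%E
      /\
      ((1 - alpha)%:E
       <= P [set w | Chat s A Yset alpha
                       [tuple (X (first i) w, Y (first i) w) | i < n]
                       (X ord_max w) (Y ord_max w)])%E).
Proof.
move=> _ /andP[alpha_gt0 _]; split=> [D x St tau|]; first exact: Chat_sub_Ctilde.
move=> dO Omega P X Y St tau mX mY XYset exXY invA mA ms valid mCtilde.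
pose Z i w := (X i w, Y i w).
have mZ i : measurable_fun setT (Z i) by exact: measurable_fun_pair.
have Chat_nonconforming : [set w | Chat s A Yset alpha
    [tuple (X (first i) w, Y (first i) w) | i < n] (X ord_max w) (Y ord_max w)]
    = ~` nonconforming s A Z ord_max alpha.
  apply/seteqP; split=> w /=; rewrite ChatE (augment_mktuple (Z ^~ w)) ltNge.
    by move=> [_ /negP].
  by move=> /negP; split=> //; exact: (XYset _ w).2.
have mChat := measurableC (measurable_nonconforming mA ms mZ ord_max alpha).
rewrite Chat_nonconforming; split; last exact: conformal_coverage (ltW alpha_gt0).
apply: le_measure; rewrite ?inE // -Chat_nonconforming => w.
exact: Chat_sub_Ctilde (valid w) _.
Qed.
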